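(* Let $v, v'$ be pure (index-free) $\lambda$-terms. The following are equivalent: (1) there is a top-level term $t$ such that $v \mapsto^* t$ in the indexed small-step head-reduction semantics, $t$ is irreducible there (there is no $t'$ with $t \mapsto t'$), and $t \hookrightarrow^* v'$ by the indexed readback relation; (2) there is a command $c$ of the projection-based head-reduction machine such that $\langle v \,\|\, \mathsf{tp}\rangle \to^* c$, $c$ is irreducible in that machine (there is no $c'$ with $c \to c'$), and $c \hookrightarrow^* v'$ by the machine's readback relation. Here $\to^*$, $\mapsto^*$ and $\hookrightarrow^*$ denote reflexive–transitive closures.
   Context: Pure $\lambda$-terms: $v ::= x \mid v\,v \mid \lambda x.v$; substitution $v[v'/x]$ is capture-avoiding. Indexed small-step semantics. Indices $i ::= \mathrm{zero} \mid \mathrm{succ}(i)$. Terms $v ::= x \mid v\,v \mid \lambda x.v \mid i$. Top-level terms $t ::= v \mid \lambda.t$ (a variable-free binder usable only at top level). Evaluation contexts $E ::= \Box \mid E\,v$. Top-level contexts $S ::= \Box \mid \lambda.S$. $\mathrm{Count}(\Box)=\mathrm{zero}$, $\mathrm{Count}(\lambda.S)=\mathrm{succ}(\mathrm{Count}(S))$. Reduction rules: $S[E[(\lambda x.v)\,v']] \mapsto S[E[v[v'/x]]]$ and $S[\lambda x.v] \mapsto S[\lambda.v[\mathrm{Count}(S)/x]]$. Readback rule: $S[\lambda.v] \hookrightarrow S[\lambda x.v[x/\mathrm{Count}(S)]]$, where $x$ is fresh and $v[x/i]$ replaces every occurrence of the index $i$ in $v$ by $x$. A top-level term $S[v]$ is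 legal iff every index $i$ occurring in $v$ satisfies $i < \mathrm{Count}(S)$; only legal top-level terms are considered. Projection-based head-reduction machine. Commands $c ::= \langle v \,\|\, E\rangle$; terms $v ::= x \mid v\,v \mid \lambda x.v \mid \mathsf{car}(S)$; co-terms $E ::= v\cdot E \mid S$; stuck co-terms $S ::= \mathsf{tp} \mid \mathsf{cdr}(S)$. Rules: $\langle v\,v' \,\|\, E\rangle \to \langle v \,\|\, v'\cdot E\rangle$; $\langle \lambda x.v \,\|\, v'\cdot E\rangle \to \langle v[v'/x] \,\|\, E\rangle$; $\langle \lambda x.v \,\|\, S\rangle \to \langle v[\mathsf{car}(S)/x] \,\|\, \mathsf{cdr}(S)\rangle$. Readback rules: $\langle v \,\|\, v'\cdot E\rangle \hookrightarrow \langle v\,v' \,\|\, E\rangle$; $\langle v \,\|\, \mathsf{tp}\rangle \hookrightarrow v$; $\langle v \,\|\, \mathsf{cdr}(S)\rangle \hookrightarrow \langle \lambda x.v[x/\mathsf{car}(S)] \,\|\, S\rangle$ with $x$ fresh, where $v[x/\mathsf{car}(S)]$ replaces every occurrence of $\mathsf{car}(S)$ in $v$ by $x$. Writing $\mathsf{cdr}^n$ for $n$ applications of $\mathsf{cdr}$, set $\mathsf{cdr}^n(\mathsf{tp}) < \mathsf{cdr}^m(\mathsf{tp})$ iff $n<m$. A command $\langle v_1 \,\|\, v_2\cdots v_n\cdot S\rangle$ is legal iff for every $\mathsf{car}(S')$ occurring in any $v_i$, $S' < S$; only legal commands are considered. *)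

(* Lambda terms are represented with de Bruijn indices for
   bound variables (terms are taken up to alpha-equivalence; "fresh x" in the
   readback rules becomes "introduce a new binder and shift free variables").
   The "indices" i of the indexed semantics and the "car(S)" of the machine are
   closed constants, distinct from variables. *)
From Stdlib Require Import Arith Relations.

Inductive lterm : Type :=
| LVar : nat -> lterm
| LApp : lterm -> lterm -> lterm
| LLam : lterm -> lterm.

(** Lambda-terms extended with closed constants of type A:
    A = nat    : the indices  i ::= zero | succ(i)  of the indexed semantics;
    A = stuck  : the constants car(S) of the projection-based machine. *)
Inductive tm (A : Type) : Type :=
| Var : nat -> tm A
| App : tm A -> tm A -> tm A
| Lam : tm A -> tm A
| Cst : A -> tm A.
Arguments Var {A} _.
Arguments App {A} _ _.
Arguments Lam {A} _.
Arguments Cst {A} _.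

Fixpoint embed {A : Type} (v : lterm) : tm A :=
  match v with
  | LVar n => Var n
  | LApp a b => App (embed a) (embed b)
  | LLam b => Lam (embed b)
  end.

Fixpoint lift {A : Type} (d c : nat) (t : tm A) : tm A :=
  match t with
  | Var n => if n <? c then Var n else Var (n + d)
  | App a b => App (lift d c a) (lift d c b)
  | Lam b => Lam (lift d (S c) b)
  | Cst x => Cst x
  end.

Fixpoint subst {A : Type} (k : nat) (u : tm A) (t : tm A) : tm A :=
  match t with
  | Var n => if n =? k then lift k 0 u
             else if k <? n then Var (n - 1) else Var n
  | App a b => App (subst k u a) (subst k u b)
  | Lam b => Lam (subst (S k) u b)
  | Cst x => Cst x
  end.

Definition beta {A : Type} (b u : tm A) : tm A := subst 0 u b.

(** [abst p d t]: replace every constant satisfying p by the variable bound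
    by a new binder placed at depth d above t (free variables are shifted).
    [Lam (abst p 0 v)] is  \x. v[x/c]  with x fresh. *)
Fixpoint abst {A : Type} (p : A -> bool) (d : nat) (t : tm A) : tm A :=
  match t with
  | Var n => if n <? d then Var n else Var (S n)
  | App a b => App (abst p d a) (abst p d b)
  | Lam b => Lam (abst p (S d) b)
  | Cst x => if p x then Var d else Cst x
  end.

Definition iterm := tm nat.

Inductive top : Type :=
| TV : iterm -> top
| TLam : top -> top.

Inductive hstep : iterm -> iterm -> Prop :=
| hs_beta : forall b u, hstep (App (Lam b) u) (beta b u)
| hs_app : forall a a' w, hstep a a' -> hstep (App a w) (App a' w).

(** [tstep k t t']: reduction of S[..] where k = Count of the enclosing
    top-level context. *)
Inductive tstep : nat -> top -> top -> Prop :=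
| ts_head : forall k v v', hstep v v' -> tstep k (TV v) (TV v')
| ts_lam : forall k b, tstep k (TV (Lam b)) (TLam (TV (beta b (Cst k))))
| ts_under : forall k t t', tstep (S k) t t' -> tstep k (TLam t) (TLam t').

Definition istep (t t' : top) : Prop := tstep 0 t t'.

(** readback  S[\.v] ~> S[\x. v[x/Count(S)]] *)
Inductive trb : nat -> top -> top -> Prop :=
| trb_here : forall k v,
    trb k (TLam (TV v)) (TV (Lam (abst (Nat.eqb k) 0 v)))
| trb_under : forall k t t', trb (S k) t t' -> trb k (TLam t) (TLam t').

Definition ireadback (t t' : top) : Prop := trb 0 t t'.

Inductive stuck : Type :=
| Tp : stuck
| Cdr : stuck -> stuck.

Fixpoint stuck_eqb (s s' : stuck) : bool :=
  match s, s' with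
  | Tp, Tp => true
  | Cdr a, Cdr b => stuck_eqb a b
  | _, _ => false
  end.

Definition mterm := tm stuck.

Inductive coterm : Type :=
| Push : mterm -> coterm -> coterm
| Stk : stuck -> coterm.

Inductive cmd : Type :=
| Cmd : mterm -> coterm -> cmd.

Inductive mstep : cmd -> cmd -> Prop :=
| ms_push : forall v v' E, mstep (Cmd (App v v') E) (Cmd v (Push v' E))
| ms_beta : forall b v' E, mstep (Cmd (Lam b) (Push v' E)) (Cmd (beta b v') E)
| ms_proj : forall b s,
    mstep (Cmd (Lam b) (Stk s)) (Cmd (beta b (Cst s)) (Stk (Cdr s))).

Inductive mrb : cmd + mterm -> cmd + mterm -> Prop :=
| mrb_app : forall v v' E,
    mrb (inl (Cmd v (Push v' E))) (inl (Cmd (App v v') E))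
| mrb_tp : forall v, mrb (inl (Cmd v (Stk Tp))) (inr v)
| mrb_cdr : forall v s,
    mrb (inl (Cmd v (Stk (Cdr s))))
        (inl (Cmd (Lam (abst (stuck_eqb s) 0 v)) (Stk s))).

(* The two machines compute the same thing: translating a command <v || w1 ... wn . cdr^k(tp)>
   into the top-level term λ.^k (v w1 ... wn), with car(cdr^j(tp)) read as the index j, sends
   every machine step either to a step of the indexed semantics or (for the push rule) to the
   identity, and sends readback steps to readback steps.  Conversely every indexed step is
   matched by a finite run of the machine: after pushing the spine of applications the head is
   a variable, an index or an abstraction, and in the last case the machine step and the indexed
   step agree.  Since both step relations and both readback relations are deterministic, the
   normal forms reached on either side correspond. *)
From Stdlib Require Import Relations Arith.

Definition normal {X : Type} (R : X -> X -> Prop) (x : X) : Prop := ~ exists y, R x y.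

Lemma rt_normal_unique {X : Type} (R : X -> X -> Prop)
  (R_det : forall a b c, R a b -> R a c -> b = c) a x y :
  clos_refl_trans X R a x -> clos_refl_trans X R a y ->
  normal R x -> normal R y -> x = y.
Proof.
  intros Hx Hy. apply clos_rt_rt1n in Hx. apply clos_rt_rt1n in Hy.
  revert y Hy. induction Hx as [x|a b x Hab _ IH]; intros y Hy Nx Ny.
  - inversion Hy; subst; [reflexivity|]. exfalso; apply Nx; eauto.
  - inversion Hy as [|a' c Hac Hcy]; subst.
    + exfalso; apply Ny; eauto.
    + rewrite (R_det _ _ _ Hab Hac) in IH. auto.
Qed.

Fixpoint tm_map {A B : Type} (f : A -> B) (t : tm A) : tm B :=
  match t with
  | Var n => Var n
  | App a b => App (tm_map f a) (tm_map f b)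
  | Lam b => Lam (tm_map f b)
  | Cst x => Cst (f x)
  end.

Section TermMap.

Variables (A B : Type) (f : A -> B).

Lemma tm_map_lift d t : forall c, tm_map f (lift d c t) = lift d c (tm_map f t).
Proof.
  induction t; intros c; simpl; try destruct (_ <? _); simpl; congruence.
Qed.

Lemma tm_map_beta b u : tm_map f (beta b u) = beta (tm_map f b) (tm_map f u).
Proof.
  unfold beta. generalize 0. induction b; intros k; simpl; try congruence.
  destruct (n =? k); [apply tm_map_lift|]. destruct (k <? n); reflexivity.
Qed.

Lemma tm_map_abst (p : A -> bool) (q : B -> bool) (Hpq : forall x, p x = q (f x)) t :
  forall d, tm_map f (abst p d t) = abst q d (tm_map f t).
Proof.
  induction t; intros d; simpl; try congruence.
  - destruct (n <? d); reflexivity.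
  - rewrite Hpq. destruct (q (f a)); reflexivity.
Qed.

Lemma tm_map_embed v : tm_map f (embed v) = embed v.
Proof. induction v; simpl; congruence. Qed.

Lemma tm_map_eq_embed v : forall w, tm_map f w = embed v -> w = embed v.
Proof.
  induction v; destruct w; simpl; intros H; try discriminate;
    injection H; intros; f_equal; auto.
Qed.

End TermMap.

Fixpoint stuck_depth (s : stuck) : nat :=
  match s with Tp => 0 | Cdr s => S (stuck_depth s) end.

Lemma stuck_eqb_depth s x : stuck_eqb s x = Nat.eqb (stuck_depth s) (stuck_depth x).
Proof. revert x; induction s; destruct x; simpl; auto. Qed.

Inductive neutral : iterm -> Prop :=
| neutral_var n : neutral (Var n)
| neutral_cst x : neutral (Cst x)
| neutral_app a w : neutral a -> neutral (App a w).

Lemma neutral_normal a : neutral a -> normal hstep a.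
Proof.
  intros Ha [a' Hs]. induction Hs; inversion Ha; subst; auto.
  match goal with H : neutral (Lam _) |- _ => inversion H end.
Qed.

Lemma hstep_det a a1 a2 : hstep a a1 -> hstep a a2 -> a1 = a2.
Proof.
  intros H1; revert a2; induction H1; intros a2 H2; inversion H2; subst; auto.
  - match goal with H : hstep (Lam _) _ |- _ => inversion H end.
  - match goal with H : hstep (Lam _) _ |- _ => inversion H end.
  - f_equal; auto.
Qed.

Lemma tstep_det k t t1 t2 : tstep k t t1 -> tstep k t t2 -> t1 = t2.
Proof.
  intros H1; revert t2; induction H1; intros t2 H2; inversion H2; subst; auto.
  - f_equal; eauto using hstep_det.
  - match goal with H : hstep (Lam _) _ |- _ => inversion H end.
  - match goal with H : hstep (Lam _) _ |- _ => inversion H end.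
  - f_equal; auto.
Qed.

Lemma trb_det k t t1 t2 : trb k t t1 -> trb k t t2 -> t1 = t2.
Proof.
  intros H1; revert t2; induction H1; intros t2 H2; inversion H2; subst; auto.
  - match goal with H : trb _ (TV _) _ |- _ => inversion H end.
  - match goal with H : trb _ (TV _) _ |- _ => inversion H end.
  - f_equal; auto.
Qed.

Fixpoint tlams (n : nat) (t : top) : top :=
  match n with 0 => t | S n => TLam (tlams n t) end.

Lemma TLam_tlams n t : TLam (tlams n t) = tlams n (TLam t).
Proof. induction n; simpl; congruence. Qed.

Lemma tstep_tlams n k t t' : tstep (n + k) t t' -> tstep k (tlams n t) (tlams n t').
Proof.
  revert k; induction n; intros k H; simpl; auto.
  constructor. apply IHn. rewrite Nat.add_succ_r. exact H.
Qed.

Lemma trb_tlams n k t t' : trb (n + k) t t' -> trb k (tlams n t) (tlams n t').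
Proof.
  revert k; induction n; intros k H; simpl; auto.
  constructor. apply IHn. rewrite Nat.add_succ_r. exact H.
Qed.

Lemma tstep_tlams_inv n k a t' : tstep k (tlams n (TV a)) t' ->
  (exists a', hstep a a') \/ exists b, a = Lam b.
Proof. revert k t'; induction n; simpl; intros k t' H; inversion H; subst; eauto. Qed.

Lemma neutral_tlams_normal n a : neutral a -> normal istep (tlams n (TV a)).
Proof.
  intros Ha [t' Ht]. destruct (tstep_tlams_inv _ _ _ _ Ht) as [[a' Hs]|[b ->]].
  - exact (neutral_normal _ Ha (ex_intro _ _ Hs)).
  - inversion Ha.
Qed.

Definition to_indexed (t : mterm) : iterm := tm_map stuck_depth t.

Fixpoint plug (a : iterm) (E : coterm) : iterm :=
  match E with Push w E => plug (App a (to_indexed w)) E | Stk _ => a end.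

Fixpoint coterm_base (E : coterm) : stuck :=
  match E with Push _ E => coterm_base E | Stk s => s end.

Definition cmd_to_top (c : cmd) : top :=
  match c with
  | Cmd v E => tlams (stuck_depth (coterm_base E)) (TV (plug (to_indexed v) E))
  end.

Lemma hstep_plug E a a' : hstep a a' -> hstep (plug a E) (plug a' E).
Proof. revert a a'; induction E; simpl; auto using hs_app. Qed.

Lemma neutral_plug E a : neutral a -> neutral (plug a E).
Proof. revert a; induction E; simpl; auto using neutral_app. Qed.

Lemma mstep_lam_simulated b E :
  exists c, mstep (Cmd (Lam b) E) c /\ istep (cmd_to_top (Cmd (Lam b) E)) (cmd_to_top c).
Proof.
  destruct E as [w E|s]; eexists; (split; [constructor|]); simpl; unfold istep, to_indexed.
  - apply tstep_tlams. rewrite Nat.add_0_r, tm_map_beta.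
    constructor. apply hstep_plug. constructor.
  - rewrite TLam_tlams. apply tstep_tlams. rewrite Nat.add_0_r, tm_map_beta.
    constructor.
Qed.

Lemma mstep_simulated c c' : mstep c c' ->
  cmd_to_top c = cmd_to_top c' \/ istep (cmd_to_top c) (cmd_to_top c').
Proof.
  intros Hs; destruct Hs as [v w E|b w E|b s].
  - left; reflexivity.
  - right. destruct (mstep_lam_simulated b (Push w E)) as (c & Hc & Hi).
    inversion Hc; subst. exact Hi.
  - right. destruct (mstep_lam_simulated b (Stk s)) as (c & Hc & Hi).
    inversion Hc; subst. exact Hi.
Qed.

Lemma rt_mstep_simulated c c' : clos_refl_trans cmd mstep c c' ->
  clos_refl_trans top istep (cmd_to_top c) (cmd_to_top c').
Proof.
  induction 1 as [c c' Hs| |]; eauto using rt_refl, rt_trans.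
  destruct (mstep_simulated _ _ Hs) as [-> | Hi]; auto using rt_refl, rt_step.
Qed.

Lemma push_spine v E : exists h E',
  clos_refl_trans cmd mstep (Cmd v E) (Cmd h E') /\
  cmd_to_top (Cmd h E') = cmd_to_top (Cmd v E) /\
  forall a b, h <> App a b.
Proof.
  revert E; induction v as [n|v1 IH1 v2 _|b _|x]; intros E;
    try (eexists _, E; split; [apply rt_refl | split; [reflexivity | discriminate]]).
  destruct (IH1 (Push v2 E)) as (h & E' & Hrun & Htop & Hh).
  exists h, E'. repeat split; auto.
  eapply rt_trans; [apply rt_step; constructor | exact Hrun].
Qed.

Lemma machine_progress c : exists c1,
  clos_refl_trans cmd mstep c c1 /\ cmd_to_top c1 = cmd_to_top c /\
  ((normal mstep c1 /\ normal istep (cmd_to_top c1)) \/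
   exists c2, mstep c1 c2 /\ istep (cmd_to_top c1) (cmd_to_top c2)).
Proof.
  destruct c as [v E]. destruct (push_spine v E) as (h & E1 & Hrun & Htop & Hh).
  exists (Cmd h E1). repeat split; auto.
  destruct h as [n|a b|b|x].
  - left. split; [intros [c' Hc']; inversion Hc'|].
    apply neutral_tlams_normal, neutral_plug, neutral_var.
  - exfalso; eapply Hh; reflexivity.
  - right. apply mstep_lam_simulated.
  - left. split; [intros [c' Hc']; inversion Hc'|].
    apply neutral_tlams_normal, neutral_plug, neutral_cst.
Qed.

Lemma istep_simulated c t' : istep (cmd_to_top c) t' ->
  exists c', clos_refl_trans cmd mstep c c' /\ cmd_to_top c' = t'.
Proof.
  intros Hs. destruct (machine_progress c) as (c1 & Hrun & Htop & [[_ N]|(c2 & Hm & Hi)]).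
  - exfalso. apply N. rewrite Htop. eauto.
  - exists c2. split; [eapply rt_trans; eauto using rt_step|].
    rewrite Htop in Hi. eapply tstep_det; eauto.
Qed.

Lemma rt_istep_simulated c t' : clos_refl_trans top istep (cmd_to_top c) t' ->
  exists c', clos_refl_trans cmd mstep c c' /\ cmd_to_top c' = t'.
Proof.
  intros H. apply clos_rt_rt1n in H. remember (cmd_to_top c) as t eqn:Ht.
  revert c Ht. induction H as [t|t t1 t' Hs _ IH]; intros c ->.
  - exists c; split; auto using rt_refl.
  - destruct (istep_simulated _ _ Hs) as (c1 & Hrun1 & Htop1).
    destruct (IH c1 (eq_sym Htop1)) as (c2 & Hrun2 & Htop2).
    exists c2; split; eauto using rt_trans.
Qed.

Lemma mnormal_inormal c : normal mstep c -> normal istep (cmd_to_top c).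
Proof.
  intros N. destruct (machine_progress c) as (c1 & Hrun & Htop & [[_ N1]|(c2 & Hm & _)]).
  - rewrite <- Htop. exact N1.
  - exfalso. apply clos_rt_rt1n in Hrun. destruct Hrun; apply N; eauto.
Qed.

Lemma mrb_rt_inr x y : clos_refl_trans_1n _ mrb x y -> forall w, x = inr w -> y = inr w.
Proof. induction 1; intros w Hw; subst; auto. inversion H. Qed.

Lemma mrb_simulated c w : clos_refl_trans _ mrb (inl c) (inr w) ->
  clos_refl_trans top ireadback (cmd_to_top c) (TV (to_indexed w)).
Proof.
  intros H. apply clos_rt_rt1n in H.
  remember (inl c) as x eqn:Hx; remember (inr w) as y eqn:Hy.
  revert c Hx Hy. induction H as [|x z y Hs Hzy IH]; intros c Hx Hy; subst; [discriminate|].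
  inversion Hs as [v u E|v|v s]; subst.
  - exact (IH _ eq_refl eq_refl).
  - pose proof (mrb_rt_inr _ _ Hzy _ eq_refl) as Hw. injection Hw as ->. apply rt_refl.
  - eapply rt_trans; [apply rt_step | exact (IH _ eq_refl eq_refl)].
    simpl; unfold ireadback, to_indexed. rewrite TLam_tlams.
    apply trb_tlams. rewrite Nat.add_0_r; simpl.
    rewrite (tm_map_abst _ _ stuck_depth (stuck_eqb s) (Nat.eqb (stuck_depth s)))
      by apply stuck_eqb_depth.
    constructor.
Qed.

Lemma mrb_total c : exists w, clos_refl_trans _ mrb (inl c) (inr w).
Proof.
  destruct c as [v E]. revert v.
  induction E as [u E IH|s]; intros v.
  - destruct (IH (App v u)) as [w Hw].
    exists w. eapply rt_trans; [apply rt_step; constructor | exact Hw].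
  - revert v; induction s as [|s IH]; intros v.
    + exists v. apply rt_step. constructor.
    + destruct (IH (Lam (abst (stuck_eqb s) 0 v))) as [w Hw].
      exists w. eapply rt_trans; [apply rt_step; constructor | exact Hw].
Qed.

Lemma readback_unique t u u' :
  clos_refl_trans top ireadback t (TV u) -> clos_refl_trans top ireadback t (TV u') -> u = u'.
Proof.
  intros H H'.
  assert (E : TV u = TV u').
  { apply (rt_normal_unique ireadback (trb_det 0) t); auto;
      intros [z Hz]; inversion Hz. }
  injection E; auto.
Qed.

Theorem theorem3 (v v' : lterm) :
  (exists t : top,
      clos_refl_trans top istep (TV (embed v)) t /\
      ~ (exists t', istep t t') /\
      clos_refl_trans top ireadback t (TV (embed v')))
  <->
  (exists c : cmd,
      clos_refl_trans cmd mstep (Cmd (embed v) (Stk Tp)) c /\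
      ~ (exists c', mstep c c') /\
      clos_refl_trans (cmd + mterm) mrb (inl c) (inr (embed v'))).
Proof.
  assert (Hinit : cmd_to_top (Cmd (embed v) (Stk Tp)) = TV (embed v)).
  { simpl. unfold to_indexed. rewrite tm_map_embed. reflexivity. }
  split.
  - intros (t & Hrun & Nt & Hrb). rewrite <- Hinit in Hrun.
    destruct (rt_istep_simulated _ _ Hrun) as (c & Hc & <-).
    destruct (machine_progress c) as (c1 & Hc1 & Htop & [[Nc1 _]|(c2 & _ & Hi)]).
    2: { exfalso. apply Nt. rewrite <- Htop. eauto. }
    destruct (mrb_total c1) as [w Hw].
    pose proof (mrb_simulated _ _ Hw) as Hrb'. rewrite Htop in Hrb'.
    pose proof (tm_map_eq_embed _ _ _ _ _ (readback_unique _ _ _ Hrb' Hrb)) as ->.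
    exists c1. eauto using rt_trans.
  - intros (c & Hrun & Nc & Hrb).
    exists (cmd_to_top c). split; [rewrite <- Hinit; auto using rt_mstep_simulated|].
    split; [exact (mnormal_inormal c Nc)|].
    pose proof (mrb_simulated _ _ Hrb) as H. unfold to_indexed in H.
    rewrite tm_map_embed in H. exact H.
Qed.
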